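(* Let ${\tt G}$ be a connected digraph with exactly $n$ edges. If the path poset $P({\tt G})$ has a maximum, then $P({\tt G})\cong\mathbb B(n)$ as posets and ${\tt G}\cong{\tt I}_n$. In particular, a connected digraph has a Boolean path poset if and only if it is isomorphic to ${\tt I}_n$ for some $n$.
   Context: A digraph ${\tt G}=(V,E)$ has finite $V$ and $E\subseteq (V\times V)\setminus\{(v,v)\}$; connected means the underlying undirected graph is connected; isomorphism is an isomorphism in the category of digraphs with injective edge-preserving vertex maps. A multipath of ${\tt G}$ is a spanning subgraph (all vertices, subset of edges) each of whose components is an isolated vertex or a simple directed path (edges $e_1,\dots,e_k$ with target of $e_i$ equal to source of $e_{i+1}$, no repeated vertex, not a cycle); the path poset $P({\tt G})$ is the set of multipaths ordered by inclusion of edge sets. $\mathbb B(n)$ is the power set of $\{0,\dots,n-1\}$ ordered by inclusion; a Boolean poset is one isomorphic to the power set of a finite set. ${\tt I}_n$ is the digraph with vertices $v_0,\dots,v_n$ and edges $(v_{i-1},v_i)$, $i=1,\dots,n$. *)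

From mathcomp Require Import all_boot.
Set Implicit Arguments. Unset Strict Implicit. Unset Printing Implicit Defensive.

(* A digraph is given by a finite vertex type V and an edge set
   E : {set V * V} with no loops (e.1 != e.2 for every e \in E). *)
Definition loopless (V : finType) (E : {set V * V}) : Prop :=
  forall e, e \in E -> e.1 != e.2.

Definition undir (V : finType) (E : {set V * V}) : rel V :=
  fun u v => ((u, v) \in E) || ((v, u) \in E).

Definition connected_digraph (V : finType) (E : {set V * V}) : Prop :=
  0 < #|V| /\ forall u v : V, connect (undir E) u v.

Definition component (V : finType) (F : {set V * V}) (v : V) : {set V} :=
  [set w | connect (undir F) v w].

(* the component C of (V,F) is an isolated vertex (s of size 1) or a simple
   directed path: its vertices are listed without repetition by s, and the
   edges of F inside C are exactly the consecutive pairs of s. *)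
Definition path_component (V : finType) (F : {set V * V}) (C : {set V}) : Prop :=
  exists s : seq V,
    [/\ 0 < size s, uniq s, [set x in s] = C &
        forall e : V * V, (e \in F) && (e.1 \in C) && (e.2 \in C) =
                           (e \in zip s (behead s))].

Definition multipath (V : finType) (E F : {set V * V}) : Prop :=
  F \subset E /\ forall v : V, path_component F (component F v).

(* the path poset P(G): multipaths ordered by inclusion of edge sets *)
Definition path_poset (V : finType) (E : {set V * V}) :=
  {F : {set V * V} | multipath E F}.

Definition pp_le (V : finType) (E : {set V * V}) (x y : path_poset E) : Prop :=
  proj1_sig x \subset proj1_sig y.

Definition has_maximum (V : finType) (E : {set V * V}) : Prop :=
  exists M : path_poset E, forall F : path_poset E, pp_le F M.

(* poset isomorphism P(G) ~= B(n), where B(n) = {set 'I_n} ordered by \subset *)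
Definition iso_Boolean (V : finType) (E : {set V * V}) (n : nat) : Prop :=
  exists f : path_poset E -> {set 'I_n},
    bijective f /\ forall x y, pp_le x y <-> f x \subset f y.

(* the digraph I_n : vertices v_0..v_n (type 'I_n.+1), edges (v_{i-1}, v_i) *)
Definition I_edges (n : nat) : {set 'I_n.+1 * 'I_n.+1} :=
  [set e : 'I_n.+1 * 'I_n.+1 | (e.2 : nat) == (e.1 : nat).+1].

Definition digraph_iso (V W : finType) (E : {set V * V}) (F : {set W * W}) : Prop :=
  exists f : V -> W, bijective f /\ forall u v, ((u, v) \in E) = ((f u, f v) \in F).

From mathcomp Require Import all_boot zify.
From Stdlib Require Import ProofIrrelevance.
Set Implicit Arguments. Unset Strict Implicit. Unset Printing Implicit Defensive.

(* A single edge is a multipath, so a maximum multipath contains every edge and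
   is E itself; since G is connected, E is then the edge set of one simple
   directed path through all vertices, i.e. G is isomorphic to I_n.  For such a
   path graph every edge subset F is a multipath, because the components of F
   are the maximal runs of consecutive steps of the path that lie in F; hence
   P(G) is the whole power set of E.  Conversely, a Boolean poset has a
   maximum. *)

Local Notation steps s := (zip s (behead s)).

Definition path_graph (V : finType) (E : {set V * V}) (s : seq V) : Prop :=
  [/\ uniq s, forall v, v \in s & E =i steps s].

Lemma mem_stepsP (V : eqType) (x0 : V) (s : seq V) (e : V * V) :
  reflect (exists2 i, i.+1 < size s & e = (nth x0 s i, nth x0 s i.+1))
          (e \in steps s).
Proof.
apply: (iffP (nthP (x0, x0))) => [[i hi <-] | [i hi ->]].
  move: hi; rewrite size_zip size_behead => hi.
  by exists i; [lia | rewrite nth_zip_cond size_zip size_behead hi nth_behead].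
exists i; first by rewrite size_zip size_behead; lia.
by rewrite nth_zip_cond size_zip size_behead ifT ?nth_behead //; lia.
Qed.

Lemma steps_map_iota (V : Type) (g : nat -> V) (a L : nat) :
  steps (map g (iota a L)) = map (fun i => (g i, g i.+1)) (iota a L.-1).
Proof.
elim: L a => [|[|L] IH] a //=.
by have := IH a.+1; rewrite /= => ->.
Qed.

Lemma zip_map2 (T U : Type) (h : T -> U) (s t : seq T) :
  zip (map h s) (map h t) = map (fun e => (h e.1, h e.2)) (zip s t).
Proof. by elim: s t => [|x s IH] [|y t] //=; rewrite IH. Qed.

Lemma undir_sym (V : finType) (F : {set V * V}) : symmetric (undir F).
Proof. by move=> x y; rewrite /undir orbC. Qed.

Section SubgraphOfSpanningPath.

Variables (V : finType) (x0 : V) (s : seq V) (F : {set V * V}).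
Hypotheses (s_uniq : uniq s) (s_full : forall v, v \in s)
           (F_steps : {subset F <= steps s}).

Local Notation N := (size s).
Local Notation g := (nth x0 s).
Local Notation linked := (connect (undir F)).

Let index_nthK i : i < N -> index (g i) s = i.
Proof. by move=> iN; rewrite index_uniq. Qed.

Let nth_indexK w : g (index w s) = w.
Proof. by rewrite nth_index. Qed.

Let index_lt w : index w s < N.
Proof. by rewrite index_mem. Qed.

Lemma F_edge_nth e : e \in F -> exists2 i, i.+1 < N & e = (g i, g i.+1).
Proof. by move/F_steps/(mem_stepsP x0). Qed.

Lemma index_le_edge i p q : (g i, g i.+1) \notin F -> (p, q) \in F ->
  (index p s <= i) = (index q s <= i).
Proof.
move=> iF pqF; have [j jN [ep eq]] := F_edge_nth pqF; subst p q.
rewrite !index_nthK //; last by lia.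
by case: (eqVneq j i) => [ji | /eqP]; [rewrite -ji pqF in iF | lia].
Qed.

Lemma linked_index_le i x y : (g i, g i.+1) \notin F -> linked x y ->
  (index x s <= i) = (index y s <= i).
Proof.
move=> iF; apply: (closed_connect (a := [pred x | index x s <= i])).
by move=> p q /orP[] pqF; rewrite !inE (index_le_edge iF pqF).
Qed.

Lemma linked_nthP j l : j <= l < N ->
  reflect (forall i, j <= i < l -> (g i, g i.+1) \in F) (linked (g j) (g l)).
Proof.
move=> /andP[jl lN]; apply: (iffP idP) => [jl_linked i /andP[ji il] | steps_F].
  apply/negPn/negP => iF.
  by have := linked_index_le iF jl_linked; rewrite !index_nthK //; lia.
elim: l jl lN steps_F => [|l IH] jl lN steps_F.
  by move: jl; rewrite leqn0 => /eqP ->.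
case: (eqVneq j l.+1) => [-> // | jl1].
apply: (connect_trans (IH _ _ _)); [lia | lia | move=> i ?; apply: steps_F; lia |].
by apply: connect1; rewrite /undir steps_F //; lia.
Qed.

Lemma component_nth_interval v : exists a b, [/\ a <= b < N,
  forall j, j < N -> (g j \in component F v) = (a <= j <= b) &
  forall i, a <= i < b -> (g i, g i.+1) \in F].
Proof.
have linked_C x y : x \in component F v -> y \in component F v -> linked x y.
  rewrite !inE (sym_connect_sym (undir_sym F)) => xv vy.
  exact: connect_trans xv vy.
have exC : exists j, (j < N) && (g j \in component F v).
  by exists (index v s); rewrite index_lt nth_indexK inE connect0.
have [a /andP[aN aC] a_min] := ex_minnP exC.
have C_bound j : (j < N) && (g j \in component F v) -> j <= N.
  by case/andP=> /ltnW.
have [b /andP[bN bC] b_max] := ex_maxnP exC C_bound.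
have /linked_nthP ab_F := linked_C _ _ aC bC.
exists a, b; split=> [| j jN | i ?]; last by apply: ab_F => //; lia.
  by rewrite bN andbT; apply: a_min; rewrite bN bC.
apply/idP/idP => [jC | /andP[aj jb]]; first by rewrite a_min ?b_max ?jN.
move: aC; rewrite !inE => va; apply: connect_trans va _.
by apply/linked_nthP => [|i ?]; [lia | apply: ab_F; lia].
Qed.

Lemma path_component_sub_steps v : path_component F (component F v).
Proof.
have [a [b [/andP[ab bN] C_nth ab_F]]] := component_nth_interval v.
have C_index w : (w \in component F v) = (a <= index w s <= b).
  by rewrite -C_nth ?nth_indexK.
have step_C i : i.+1 < N ->
    [&& (g i, g i.+1) \in F, g i \in component F v & g i.+1 \in component F v]
    = (a <= i < b).
  move=> iN; rewrite !C_nth //; try lia.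
  apply/and3P/idP => [[_ /andP[ai _] /andP[_ ib]] | /andP[ai ib]]; first lia.
  by split; [apply: ab_F | apply/andP | apply/andP]; lia.
exists (map g (iota a (b - a).+1)); split.
- by rewrite size_map size_iota.
- rewrite map_inj_in_uniq ?iota_uniq // => i j; rewrite !mem_iota => iab jab.
  move/eqP; rewrite nth_uniq // => [/eqP //||]; apply: leq_ltn_trans bN; lia.
- apply/setP => w; rewrite inE C_index; apply/mapP/idP => [[i] | wab].
    by rewrite mem_iota => iab ->; rewrite index_nthK; lia.
  by exists (index w s); rewrite ?nth_indexK // mem_iota; lia.
- move=> [p q]; rewrite steps_map_iota /=.
  apply/idP/mapP => [/[dup] pqC /andP[/andP[pqF _] _] | [i]].
    have [i iN [ep eq]] := F_edge_nth pqF; subst p q.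
    by exists i => //; rewrite mem_iota; move: pqC; rewrite -andbA step_C //; lia.
  rewrite mem_iota => iab [-> ->]; rewrite -andbA step_C //; lia.
Qed.

End SubgraphOfSpanningPath.

Lemma multipath_sub_steps (V : finType) (s : seq V) (E F : {set V * V}) :
  uniq s -> (forall v, v \in s) -> F \subset E -> {subset F <= steps s} ->
  multipath E F.
Proof.
move=> s_uniq s_full FE F_steps; split=> // v.
exact (path_component_sub_steps v s_uniq s_full F_steps v).
Qed.

Lemma multipath_edge (V : finType) (E : {set V * V}) (e : V * V) :
  loopless E -> e \in E -> multipath E [set e].
Proof.
case: e => x y E_loopless xyE; have xy : x != y := E_loopless _ xyE.
pose s := x :: y :: [seq w <- enum V | w \notin [:: x; y]].
apply: (multipath_sub_steps (s := s)); rewrite ?sub1set //.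
- rewrite /s /= filter_uniq ?enum_uniq // !inE !mem_filter !inE !eqxx.
  by rewrite (negPf xy) eq_sym (negPf xy).
- by move=> w; rewrite /s !inE mem_filter mem_enum !inE andbT; case: eqP; case: eqP.
- by move=> e; rewrite inE => /eqP ->; rewrite /s /= inE eqxx.
Qed.

Lemma has_maximum_multipath (V : finType) (E : {set V * V}) :
  loopless E -> has_maximum E -> multipath E E.
Proof.
move=> E_loopless [[M [ME M_comp]] M_max].
suff -> : E = M by split.
apply/eqP; rewrite eqEsubset ME andbT; apply/subsetP => e eE.
by have := M_max (exist _ _ (multipath_edge E_loopless eE)); rewrite /pp_le sub1set.
Qed.

Lemma connected_multipath_path_graph (V : finType) (E : {set V * V}) :
  connected_digraph E -> multipath E E -> exists s, path_graph E s.
Proof.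
move=> [/card_gt0P[v _] E_conn] [_ E_comp].
have compT : component E v = setT by apply/setP => w; rewrite !inE E_conn.
have [s [_ s_uniq s_comp s_steps]] := E_comp v; rewrite compT in s_comp s_steps.
exists s; split=> // [w | e]; first by rewrite -[w \in s]inE s_comp.
by rewrite -s_steps !inE !andbT.
Qed.

Lemma has_maximum_path_graph (V : finType) (E : {set V * V}) :
  loopless E -> connected_digraph E -> has_maximum E -> exists s, path_graph E s.
Proof.
move=> E_loopless E_conn /(has_maximum_multipath E_loopless).
exact: connected_multipath_path_graph.
Qed.

Lemma multipath_path_graph (V : finType) (E F : {set V * V}) (s : seq V) :
  path_graph E s -> multipath E F <-> F \subset E.
Proof.
move=> [s_uniq s_full E_steps]; split=> [[] // | FE].
apply: (multipath_sub_steps s_uniq s_full FE) => e /(subsetP FE).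
by rewrite E_steps.
Qed.

Lemma card_path_graph (V : finType) (E : {set V * V}) (s : seq V) :
  path_graph E s -> #|E| = (size s).-1.
Proof.
move=> [s_uniq _ E_steps]; rewrite (eq_card E_steps) (card_uniqP (zip_uniql _ s_uniq)).
by rewrite size_zip size_behead; lia.
Qed.

Lemma path_graph_iso (V : finType) (x0 : V) (E : {set V * V}) (s : seq V) :
  path_graph E s -> digraph_iso E (I_edges (size s).-1).
Proof.
move=> [s_uniq s_full E_steps].
have size_s : (size s).-1.+1 = size s by move: (s_full x0); case: (s).
have index_lt w : index w s < (size s).-1.+1 by rewrite size_s index_mem.
exists (fun w => inord (index w s)); split.
  exists (fun i : 'I_(size s).-1.+1 => nth x0 s i) => [w | i] /=.
    by rewrite inordK // nth_index.
  by rewrite index_uniq ?inord_val // -[X in _ < X]size_s.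
move=> u w; rewrite E_steps inE /= !inordK //.
apply/(mem_stepsP x0)/eqP => [[i i_lt [-> ->]] | uw].
  by rewrite !index_uniq //; lia.
by exists (index u s); rewrite -?uw ?index_mem ?nth_index.
Qed.

Lemma iso_Boolean_of_subsets (V : finType) (E : {set V * V}) :
  (forall F : {set V * V}, F \subset E -> multipath E F) -> iso_Boolean E #|E|.
Proof.
move=> sub_multipath.
pose to_set (F : path_poset E) : {set 'I_#|E|} := [set i | enum_val i \in proj1_sig F].
have imset_sub (X : {set 'I_#|E|}) : [set enum_val i | i in X] \subset E.
  by apply/subsetP => _ /imsetP[i _ ->]; exact: enum_valP.
pose of_set X : path_poset E := exist (multipath E) _ (sub_multipath _ (imset_sub X)).
have to_setK : cancel to_set of_set.
  move=> [F [FE F_comp]]; apply: subset_eq_compat; apply/setP => e.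
  apply/imsetP/idP => [[i] | eF]; first by rewrite inE => ? ->.
  have eE := subsetP FE e eF.
  by exists (enum_rank_in eE e); rewrite ?inE enum_rankK_in.
have of_setK : cancel of_set to_set.
  by move=> X; apply/setP => i; rewrite inE mem_imset //; exact: enum_val_inj.
exists to_set; split; first by exists of_set.
move=> F G; split=> [FG | ]; first by apply/subsetP => i; rewrite !inE; apply: (subsetP FG).
by rewrite -{2}(to_setK F) -{2}(to_setK G) => /(imsetS enum_val).
Qed.

Lemma path_graph_Boolean (V : finType) (E : {set V * V}) (s : seq V) :
  path_graph E s -> iso_Boolean E (size s).-1.
Proof.
move=> E_path; rewrite -(card_path_graph E_path).
by apply: iso_Boolean_of_subsets => F; rewrite (multipath_path_graph _ E_path).
Qed.

Lemma iso_Boolean_has_maximum (V : finType) (E : {set V * V}) (n : nat) :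
  iso_Boolean E n -> has_maximum E.
Proof.
move=> [f [[g fK gK] f_mono]]; exists (g setT) => F.
by apply/f_mono; rewrite gK subsetT.
Qed.

Lemma path_graph_I_edges (n : nat) : path_graph (I_edges n) (enum 'I_n.+1).
Proof.
split=> [|i|[i j]]; rewrite ?enum_uniq ?mem_enum // inE /=.
apply/eqP/(mem_stepsP ord0) => [ji | [k]]; rewrite -cardE card_ord.
  exists i; first by rewrite -ji.
  by congr pair; apply: val_inj; rewrite /= nth_enum_ord // -ji.
by move=> k_lt [-> ->]; rewrite !nth_enum_ord //; lia.
Qed.

Lemma digraph_iso_path_graph (V W : finType) (E : {set V * V}) (F : {set W * W})
    (t : seq W) :
  digraph_iso E F -> path_graph F t -> exists s, path_graph E s.
Proof.
move=> [f [[g fK gK] f_edges]] [t_uniq t_full F_steps].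
have g_inj : injective g := can_inj gK.
have g2_inj : injective (fun e : W * W => (g e.1, g e.2)).
  by move=> [a b] [c d] /= [/g_inj -> /g_inj ->].
exists (map g t); split=> [|v|[u w]].
- by rewrite map_inj_uniq.
- by rewrite -(fK v) map_f.
by rewrite f_edges F_steps behead_map zip_map2 -{2}(fK u) -{2}(fK w) -(mem_map g2_inj).
Qed.

Theorem proposition2p34 :
  (forall (V : finType) (E : {set V * V}) (n : nat),
     loopless E -> connected_digraph E -> #|E| = n ->
     has_maximum E ->
     iso_Boolean E n /\ digraph_iso E (I_edges n)) /\
  (forall (V : finType) (E : {set V * V}),
     loopless E -> connected_digraph E ->
     ((exists m : nat, iso_Boolean E m) <->
      (exists m : nat, digraph_iso E (I_edges m)))).
Proof.
split=> [V E n E_loopless E_conn <- E_max | V E E_loopless E_conn].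
  have [s E_path] := has_maximum_path_graph E_loopless E_conn E_max.
  have [/card_gt0P[x0 _] _] := E_conn.
  rewrite (card_path_graph E_path).
  by split; [exact: path_graph_Boolean E_path | exact (path_graph_iso x0 E_path)].
have [/card_gt0P[x0 _] _] := E_conn.
split=> [[m /iso_Boolean_has_maximum E_max] | [m E_iso]].
  have [s E_path] := has_maximum_path_graph E_loopless E_conn E_max.
  by exists (size s).-1; exact (path_graph_iso x0 E_path).
have [s E_path] := digraph_iso_path_graph E_iso (path_graph_I_edges m).
by exists (size s).-1; exact: path_graph_Boolean E_path.
Qed.
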